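(* Let $\alpha_1,\alpha_2,\alpha_3\in(0,\pi)$ with $\alpha_1+\alpha_2+\alpha_3=2\pi$ and $\alpha_2\ge\alpha_1$. Then $$(\sin\alpha_1+\sin\alpha_2+\sin\alpha_3)^2<\Big[\big(\sin\tfrac{\alpha_3}{2}-\sin\tfrac{\alpha_2-\alpha_1}{2}\big)\sin\alpha_2+\big(\sin\tfrac{\alpha_3}{2}+\sin\tfrac{\alpha_2-\alpha_1}{2}\big)\sin\alpha_1\Big]^2+\Big[(\sin\alpha_1+\sin\alpha_2)\big(\cos\tfrac{\alpha_3}{2}+\cos\tfrac{\alpha_2-\alpha_1}{2}\big)\Big]^2.$$ Equivalently, if $\sigma_{12},\sigma_{13},\sigma_{23}>0$ satisfy $\sin\alpha_1/\sigma_{23}=\sin\alpha_2/\sigma_{13}=\sin\alpha_3/\sigma_{12}$, then $$(\sigma_{12}+\sigma_{13}+\sigma_{23})^2<\Big[\big(\sin\tfrac{\alpha_3}{2}-\sin\tfrac{\alpha_2-\alpha_1}{2}\big)\sigma_{13}+\big(\sin\tfrac{\alpha_3}{2}+\sin\tfrac{\alpha_2-\alpha_1}{2}\big)\sigma_{23}\Big]^2+\Big[(\sigma_{13}+\sigma_{23})\big(\cos\tfrac{\alpha_3}{2}+\cos\tfrac{\alpha_2-\alpha_1}{2}\big)\Big]^2.$$ *)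

From Stdlib Require Import Reals.
Open Scope R_scope.

From Stdlib Require Import Reals Lra Psatz.
Open Scope R_scope.

(* Put h := a3/2 and v := (a2 - a1)/2, and abbreviate
   s := sin h, c := cos h, e := sin v, d := cos v.  Since a1 = PI - (h + v)
   and a2 = PI - (h - v), the three sines become polynomials in s, c, d, e:
     sin a1 = s d + c e,   sin a2 = s d - c e,   sin a3 = 2 s c.
   After this substitution the first inequality is purely algebraic: using
   d^2 + e^2 = 1, (right side) - (left side) equals
     4 (s - e) (s d - c e) (s^2 d + c e^2 + s (c + d) e),
   and every factor is positive for the angles at hand (s d - c e = sin a2).
   The second inequality is the first one rescaled: the proportionality
   hypotheses say that (s23, s13, s12) is a positive multiple of
   (sin a1, sin a2, sin a3), and both sides are homogeneous of degree 2.
   The file proves the algebraic inequality, the half-angle expressions of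
   the sines with the relevant signs, the trigonometric inequality, the
   rescaling step, and finally the theorem. *)

Lemma half_angle_polynomial_inequality (s c d e : R) :
  d ^ 2 + e ^ 2 = 1 -> 0 < s -> 0 <= c -> 0 < d -> 0 <= e ->
  0 < s - e -> 0 < s * d - c * e ->
  ((s * d + c * e) + (s * d - c * e) + 2 * s * c) ^ 2 <
    ((s - e) * (s * d - c * e) + (s + e) * (s * d + c * e)) ^ 2
    + (((s * d + c * e) + (s * d - c * e)) * (c + d)) ^ 2.
Proof.
  intros Hde Hs Hc Hd He Hse Hsin2.
  set (third := s ^ 2 * d + c * e ^ 2 + s * (c + d) * e).
  assert (Hthird : 0 < third).
  { assert (0 < s ^ 2 * d) by (apply Rmult_lt_0_compat; nra).
    assert (0 <= c * e ^ 2) by (apply Rmult_le_pos; nra).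
    assert (0 <= s * (c + d) * e) by (apply Rmult_le_pos; nra).
    unfold third; lra. }
  assert (Hgap : ((s - e) * (s * d - c * e) + (s + e) * (s * d + c * e)) ^ 2
                 + (((s * d + c * e) + (s * d - c * e)) * (c + d)) ^ 2
                 - ((s * d + c * e) + (s * d - c * e) + 2 * s * c) ^ 2
               = 4 * ((s - e) * (s * d - c * e)) * third
                 + 4 * s ^ 2 * (c + d) ^ 2 * (d ^ 2 + e ^ 2 - 1))
    by (unfold third; ring).
  rewrite Hde in Hgap.
  assert (0 < (s - e) * (s * d - c * e) * third)
    by (apply Rmult_lt_0_compat; [apply Rmult_lt_0_compat|]; assumption).
  lra.
Qed.

Lemma sines_in_half_angles (a1 a2 a3 : R) :
  a1 + a2 + a3 = 2 * PI ->
  let h := a3 / 2 in let v := (a2 - a1) / 2 in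
  sin a1 = sin h * cos v + cos h * sin v /\
  sin a2 = sin h * cos v - cos h * sin v /\
  sin a3 = 2 * sin h * cos h.
Proof.
  intros Hsum h v.
  split; [|split].
  - replace a1 with (PI - (h + v)) by (unfold h, v; lra).
    now rewrite sin_PI_x, sin_plus.
  - replace a2 with (PI - (h - v)) by (unfold h, v; lra).
    now rewrite sin_PI_x, sin_minus.
  - replace a3 with (2 * h) by (unfold h; field).
    apply sin_2a.
Qed.

(* Sign information on the half angles: h lies in (0, PI/2), v in
   [0, PI/2), and v < h because h - v = PI - a2. *)
Lemma half_angle_signs (a1 a2 a3 : R) :
  0 < a1 < PI -> 0 < a2 < PI -> 0 < a3 < PI ->
  a1 + a2 + a3 = 2 * PI -> a1 <= a2 ->
  let h := a3 / 2 in let v := (a2 - a1) / 2 in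
  0 < sin h /\ 0 < cos h /\ 0 < cos v /\ 0 <= sin v /\ sin v < sin h.
Proof.
  intros H1 H2 H3 Hsum Hle h v.
  assert (PI_pos : 0 < PI) by apply PI_RGT_0.
  split; [|split; [|split; [|split]]].
  - apply sin_gt_0; unfold h; lra.
  - apply cos_gt_0; unfold h; lra.
  - apply cos_gt_0; unfold v; lra.
  - apply sin_ge_0; unfold v; lra.
  - apply sin_increasing_1; unfold h, v; lra.
Qed.

Lemma sine_sum_inequality (a1 a2 a3 : R) :
  0 < a1 < PI -> 0 < a2 < PI -> 0 < a3 < PI ->
  a1 + a2 + a3 = 2 * PI -> a1 <= a2 ->
  (sin a1 + sin a2 + sin a3) ^ 2 <
     ((sin (a3 / 2) - sin ((a2 - a1) / 2)) * sin a2
      + (sin (a3 / 2) + sin ((a2 - a1) / 2)) * sin a1) ^ 2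
     + ((sin a1 + sin a2) * (cos (a3 / 2) + cos ((a2 - a1) / 2))) ^ 2.
Proof.
  intros H1 H2 H3 Hsum Hle.
  destruct (sines_in_half_angles a1 a2 a3 Hsum) as [E1 [E2 E3]].
  destruct (half_angle_signs a1 a2 a3 H1 H2 H3 Hsum Hle)
    as [Hs [Hc [Hd [He Hse]]]].
  assert (Hsin2 : 0 < sin a2) by (apply sin_gt_0; lra).
  assert (Hpyth : cos ((a2 - a1) / 2) ^ 2 + sin ((a2 - a1) / 2) ^ 2 = 1).
  { rewrite Rplus_comm, <- !Rsqr_pow2; apply sin2_cos2. }
  rewrite E2 in Hsin2; rewrite E1, E2, E3.
  apply half_angle_polynomial_inequality; lra.
Qed.

(* Both sides are quadratic forms in the three sines, so the inequality is
   preserved when the sines are replaced by a positive multiple of them. *)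
Lemma rescaled_inequality (A B C x1 x2 x3 t : R) :
  0 < t ->
  (x1 + x2 + x3) ^ 2 < ((A - B) * x2 + (A + B) * x1) ^ 2 + ((x1 + x2) * C) ^ 2 ->
  (t * x3 + t * x2 + t * x1) ^ 2 <
    ((A - B) * (t * x2) + (A + B) * (t * x1)) ^ 2 + ((t * x2 + t * x1) * C) ^ 2.
Proof.
  intros Ht Hineq.
  replace ((t * x3 + t * x2 + t * x1) ^ 2) with (t ^ 2 * (x1 + x2 + x3) ^ 2) by ring.
  replace (((A - B) * (t * x2) + (A + B) * (t * x1)) ^ 2 + ((t * x2 + t * x1) * C) ^ 2)
    with (t ^ 2 * (((A - B) * x2 + (A + B) * x1) ^ 2 + ((x1 + x2) * C) ^ 2)) by ring.
  apply Rmult_lt_compat_l; [apply pow_lt|]; assumption.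
Qed.

Lemma side_from_ratio (x y k : R) : 0 < y -> 0 < k -> x / y = k -> y = / k * x.
Proof.
  intros Hy Hk Hratio.
  assert (Hx : x = k * y) by (rewrite <- Hratio; field; lra).
  rewrite Hx; field; lra.
Qed.

Theorem mainTheorem7 (a1 a2 a3 : R) :
  0 < a1 < PI -> 0 < a2 < PI -> 0 < a3 < PI ->
  a1 + a2 + a3 = 2 * PI -> a1 <= a2 ->
  ((sin a1 + sin a2 + sin a3) ^ 2 <
     ((sin (a3 / 2) - sin ((a2 - a1) / 2)) * sin a2
      + (sin (a3 / 2) + sin ((a2 - a1) / 2)) * sin a1) ^ 2
     + ((sin a1 + sin a2) * (cos (a3 / 2) + cos ((a2 - a1) / 2))) ^ 2)
  /\
  (forall s12 s13 s23 : R, 0 < s12 -> 0 < s13 -> 0 < s23 ->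
     sin a1 / s23 = sin a2 / s13 -> sin a2 / s13 = sin a3 / s12 ->
     (s12 + s13 + s23) ^ 2 <
       ((sin (a3 / 2) - sin ((a2 - a1) / 2)) * s13
        + (sin (a3 / 2) + sin ((a2 - a1) / 2)) * s23) ^ 2
       + ((s13 + s23) * (cos (a3 / 2) + cos ((a2 - a1) / 2))) ^ 2).
Proof.
  intros H1 H2 H3 Hsum Hle.
  pose proof (sine_sum_inequality a1 a2 a3 H1 H2 H3 Hsum Hle) as Hsines.
  split; [exact Hsines|].
  intros s12 s13 s23 H12 H13 H23 Hr1 Hr3.
  set (k := sin a2 / s13) in *.
  assert (Hk : 0 < k) by (apply Rdiv_lt_0_compat; [apply sin_gt_0|]; lra).
  rewrite (side_from_ratio _ _ _ H23 Hk Hr1),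
          (side_from_ratio _ _ _ H12 Hk (eq_sym Hr3)),
          (side_from_ratio _ _ _ H13 Hk eq_refl).
  apply rescaled_inequality; [apply Rinv_0_lt_compat|]; assumption.
Qed.
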